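(* Let $E=(E_-,\infty)$ with $E_-\in\{-\infty\}\cup\mathbb R$. Let $u,\tilde u:E\to(0,\infty)$ be two global $C^2$ solutions of $$0=\tfrac12b^2u''+\tilde au'+\eta u-u^2-d\frac{(u')^2}{u}$$ such that $\tilde u(y)/u(y)\to1$ as $y\to\partial E$ (i.e. as $y\downarrow E_-$ and as $y\to\infty$). Then $u=\tilde u$.
   Context: $r,\lambda,\sigma,a,b,\rho,\delta:E\to\mathbb R$ are locally Lipschitz with $\sigma>0$, $b(y)\neq0$, $\rho(y)\in[-1,1]$; $R\in(0,\infty)\setminus\{1\}$. Define $\eta=\frac1R\big(\delta-(1-R)(r+\frac{\lambda^2}{2R})\big)$, $\tilde a=a+\frac{1-R}{R}\rho\lambda b$, $d=\frac12b^2((1-\rho^2)R+\rho^2+1)$. *)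

From Stdlib Require Import Reals.
From Coquelicot Require Import Coquelicot.
Open Scope R_scope.

Definition inE (Em : Rbar) (y : R) : Prop := Rbar_lt Em (Finite y).

Definition loc_lipschitz_on (Em : Rbar) (f : R -> R) : Prop :=
  forall y, inE Em y ->
    exists eps : R, exists L : R, 0 < eps /\
      forall x z, inE Em x -> inE Em z -> Rabs (x - y) < eps -> Rabs (z - y) < eps ->
        Rabs (f x - f z) <= L * Rabs (x - z).

Definition eta_c (R0 : R) (r lam delta : R -> R) (y : R) : R :=
  / R0 * (delta y - (1 - R0) * (r y + (lam y) ^ 2 / (2 * R0))).
Definition atilde (R0 : R) (a rho lam b : R -> R) (y : R) : R :=
  a y + (1 - R0) / R0 * rho y * lam y * b y.
Definition d_c (R0 : R) (b rho : R -> R) (y : R) : R :=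
  / 2 * (b y) ^ 2 * ((1 - (rho y) ^ 2) * R0 + (rho y) ^ 2 + 1).

Definition global_C2_solution (Em : Rbar) (R0 : R) (r lam a b rho delta : R -> R)
    (u : R -> R) : Prop :=
  (forall y, inE Em y -> 0 < u y) /\
  exists u1 u2 : R -> R,
    forall y, inE Em y ->
      is_derive u y (u1 y) /\ is_derive u1 y (u2 y) /\ continuous u2 y /\
      0 = / 2 * (b y) ^ 2 * u2 y + atilde R0 a rho lam b y * u1 y
          + eta_c R0 r lam delta y * u y - (u y) ^ 2
          - d_c R0 b rho y * (u1 y) ^ 2 / u y.

Definition lower_boundary_filter (Em : Rbar) : (R -> Prop) -> Prop :=
  match Em with
  | Finite e => at_right e
  | m_infty => Rbar_locally m_infty
  | p_infty => Rbar_locally p_infty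
  end.

(* Let w = ut / u. If w exceeded 1 somewhere, then, since w tends to 1 at both ends of E, it would
   attain an interior maximum w(y0) > 1. There w'(y0) = 0, i.e. ut' u = ut u', and subtracting the
   equations multiplied by ut and u gives 1/2 b^2 (ut'' u - ut u'') = u ut (ut - u) > 0: the terms
   in eta and d cancel at such a tangency. Hence w''(y0) > 0, contradicting maximality. So ut <= u,
   and u <= ut by symmetry. *)

From Stdlib Require Import Reals Lra.
From Coquelicot Require Import Coquelicot.
Open Scope R_scope.

Lemma is_derive_continuity_pt (f : R -> R) x l : is_derive f x l -> continuity_pt f x.
Proof.
  intro Hf. apply is_derive_Reals in Hf.
  exact (derivable_continuous_pt f x (exist _ l Hf)).
Qed.

Lemma is_derive_pos_right (f : R -> R) x l : is_derive f x l -> 0 < l ->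
  exists d, 0 < d /\ forall h, 0 < h < d -> f x < f (x + h).
Proof.
  intros Hf Hl. apply is_derive_Reals in Hf.
  destruct (Hf l Hl) as [d Hd]. exists d. split; [apply cond_pos|].
  intros h Hh.
  assert (Hq := Hd h ltac:(lra) ltac:(rewrite Rabs_pos_eq; lra)).
  apply Rabs_def2 in Hq.
  set (q := (f (x + h) - f x) / h) in *.
  assert (Hfq : f (x + h) - f x = q * h) by (unfold q; field; lra).
  assert (0 < q * h) by (apply Rmult_lt_0_compat; lra).
  lra.
Qed.

Lemma is_derive_local_max (f : R -> R) a b x l : a < x < b ->
  (forall t, a < t < b -> f t <= f x) -> is_derive f x l -> l = 0.
Proof.
  intros [Hax Hxb] Hmax Hf. apply is_derive_Reals in Hf.
  exact (deriv_maximum f a b x (exist _ l Hf) Hax Hxb (fun t Hat Htb => Hmax t (conj Hat Htb))).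
Qed.

Lemma second_derivative_test_right (f df : R -> R) x0 d l : 0 < d ->
  (forall x, x0 <= x < x0 + d -> is_derive f x (df x)) ->
  df x0 = 0 -> is_derive df x0 l -> 0 < l ->
  exists x, x0 < x < x0 + d /\ f x0 < f x.
Proof.
  intros Hd Hf Hdf0 Hdf Hl.
  destruct (is_derive_pos_right _ _ _ Hdf Hl) as [d' [Hd' Hdf_pos]].
  rewrite Hdf0 in Hdf_pos.
  set (e := Rmin d d').
  assert (He : 0 < e) by (apply Rmin_glb_lt; lra).
  assert (Hed : e <= d) by apply Rmin_l.
  assert (Hed' : e <= d') by apply Rmin_r.
  assert (Hpos : forall x, x0 < x < x0 + e -> 0 < df x).
  { intros x Hx. replace x with (x0 + (x - x0)) by ring. apply Hdf_pos. lra. }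
  assert (Hmono : f x0 <= f (x0 + e / 4)).
  { destruct (MVT_gen f x0 (x0 + e / 4) df) as [c [Hc Hfc]].
    - intros x Hx. rewrite Rmin_left, Rmax_right in Hx by lra. apply Hf. lra.
    - intros x Hx. rewrite Rmin_left, Rmax_right in Hx by lra.
      apply (is_derive_continuity_pt _ _ (df x)), Hf. lra.
    - rewrite Rmin_left, Rmax_right in Hc by lra.
      assert (0 <= df c) by (destruct (Req_dec c x0) as [->|]; [lra|left; apply Hpos; lra]).
      assert (0 <= df c * (x0 + e / 4 - x0)) by (apply Rmult_le_pos; lra).
      lra. }
  assert (Hincr : f (x0 + e / 4) < f (x0 + e / 2)).
  { apply (incr_function f x0 (x0 + e) df); simpl; try lra.
    - intros x Hx1 Hx2. apply Hf. lra.
    - intros x Hx1 Hx2. apply Hpos. lra. }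
  exists (x0 + e / 2). split; lra.
Qed.

Lemma filterlim_lt_eventually (F : (R -> Prop) -> Prop) (f : R -> R) l c :
  filterlim f F (locally l) -> l < c -> F (fun x => f x < c).
Proof. intros Hf Hlc. exact (Hf _ (open_lt c l Hlc)). Qed.

Lemma filterlim_ratio_inv (F : (R -> Prop) -> Prop) {FF : Filter F} (u v : R -> R) :
  F (fun y => 0 < u y /\ 0 < v y) ->
  filterlim (fun y => v y / u y) F (locally 1) ->
  filterlim (fun y => u y / v y) F (locally 1).
Proof.
  intros Hpos Hlim.
  apply (filterlim_ext_loc (fun y => / (v y / u y))).
  - revert Hpos. apply filter_imp. intros y [Hu Hv]. field. lra.
  - eapply filterlim_comp; [exact Hlim|].
    assert (Hinv := continuous_Rinv 1 R1_neq_R0). unfold continuous in Hinv.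
    rewrite Rinv_1 in Hinv. exact Hinv.
Qed.

Global Instance lower_boundary_filter_proper Em : ProperFilter (lower_boundary_filter Em).
Proof. destruct Em; simpl; exact _. Qed.

Lemma lower_boundary_filter_below Em y : Em <> p_infty -> inE Em y ->
  lower_boundary_filter Em (fun a => inE Em a /\ a < y).
Proof.
  intros HEm Hy. destruct Em as [e| |]; simpl in *.
  - assert (Hye : 0 < y - e) by lra.
    exists (mkposreal _ Hye). intros a Ha Hea. split; [exact Hea|].
    apply Rabs_def2 in Ha. unfold minus, plus, opp in Ha. simpl in Ha. lra.
  - congruence.
  - exists y. intros a Ha. split; [exact I|exact Ha].
Qed.

Lemma p_infty_inE Em : Em <> p_infty -> Rbar_locally p_infty (inE Em).
Proof.
  intro HEm. destruct Em as [e| |]; simpl.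
  - exists e. intros y Hy. exact Hy.
  - congruence.
  - exists 0. intros. exact I.
Qed.

Lemma inE_le Em x z : inE Em x -> x <= z -> inE Em z.
Proof. destruct Em; simpl; auto; intros; lra. Qed.

Lemma wronskian_deriv_pos (B A H D u u1 u2 v v1 v2 : R) : B <> 0 -> 0 < u < v ->
  v1 * u - v * u1 = 0 ->
  0 = / 2 * B ^ 2 * u2 + A * u1 + H * u - u ^ 2 - D * u1 ^ 2 / u ->
  0 = / 2 * B ^ 2 * v2 + A * v1 + H * v - v ^ 2 - D * v1 ^ 2 / v ->
  0 < v2 * u - v * u2.
Proof.
  intros HB [Hu Huv] Htan Eu Ev.
  assert (Hv1 : v1 = v * u1 / u).
  { apply (Rmult_eq_reg_r u); [|lra]. replace (v * u1 / u * u) with (v * u1) by (field; lra). lra. }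
  rewrite Hv1 in Ev.
  assert (Hgap : / 2 * B ^ 2 * (v2 * u - v * u2) = v * u * (v - u)).
  { replace (/ 2 * B ^ 2 * (v2 * u - v * u2))
      with (u * (/ 2 * B ^ 2 * v2) - v * (/ 2 * B ^ 2 * u2)) by ring.
    replace (/ 2 * B ^ 2 * v2) with (- (A * (v * u1 / u)) - H * v + v ^ 2 + D * (v * u1 / u) ^ 2 / v) by lra.
    replace (/ 2 * B ^ 2 * u2) with (- (A * u1) - H * u + u ^ 2 + D * u1 ^ 2 / u) by lra.
    field. lra. }
  assert (HB2 : 0 < / 2 * B ^ 2) by (assert (0 < B ^ 2) by (apply pow2_gt_0; auto); lra).
  assert (0 < v * u * (v - u)) by (apply Rmult_lt_0_compat; [apply Rmult_lt_0_compat|]; lra).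
  nra.
Qed.

Definition positive_solution (Em : Rbar) (B A H D u : R -> R) : Prop :=
  (forall y, inE Em y -> 0 < u y) /\
  exists u1 u2 : R -> R,
    forall y, inE Em y ->
      is_derive u y (u1 y) /\ is_derive u1 y (u2 y) /\ continuous u2 y /\
      0 = / 2 * (B y) ^ 2 * u2 y + A y * u1 y + H y * u y - (u y) ^ 2
          - D y * (u1 y) ^ 2 / u y.

Section Comparison.

Variables (Em : Rbar) (B A H D u v : R -> R).
Hypothesis HB : forall y, inE Em y -> B y <> 0.
Hypothesis Hu : positive_solution Em B A H D u.
Hypothesis Hv : positive_solution Em B A H D v.

Lemma ratio_continuity_pt y : inE Em y -> continuity_pt (fun t => v t / u t) y.
Proof.
  intro Hy. destruct Hu as [upos [u1 [u2 Hu']]]. destruct Hv as [_ [v1 [v2 Hv']]].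
  destruct (Hu' y Hy) as [du _]. destruct (Hv' y Hy) as [dv _].
  eapply is_derive_continuity_pt, is_derive_div; [exact dv|exact du|].
  apply Rgt_not_eq, upos, Hy.
Qed.

Lemma ratio_local_max_le a b y0 : inE Em a -> a < y0 < b ->
  (forall t, a < t < b -> v t / u t <= v y0 / u y0) -> v y0 <= u y0.
Proof.
  intros Ha Hy0 Hmax.
  destruct Hu as [upos [u1 [u2 Hu']]]. destruct Hv as [vpos [v1 [v2 Hv']]].
  apply Rnot_lt_le. intro Huv.
  assert (HinE : forall t, a <= t -> inE Em t) by (intros; eapply inE_le; eauto).
  assert (Hy0E : inE Em y0) by (apply HinE; lra).
  assert (Hu0 : 0 < u y0) by auto.
  set (W := fun t => (v1 t * u t - v t * u1 t) / u t ^ 2).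
  assert (Hw : forall t, a <= t -> is_derive (fun t => v t / u t) t (W t)).
  { intros t Ht. destruct (Hu' t (HinE t Ht)) as [du _]. destruct (Hv' t (HinE t Ht)) as [dv _].
    apply is_derive_div; auto. apply Rgt_not_eq, upos, HinE, Ht. }
  assert (HW0 : W y0 = 0).
  { apply (is_derive_local_max (fun t => v t / u t) a b y0); auto. apply Hw. lra. }
  assert (Htan : v1 y0 * u y0 - v y0 * u1 y0 = 0).
  { replace (v1 y0 * u y0 - v y0 * u1 y0) with (W y0 * u y0 ^ 2) by (unfold W; field; lra).
    rewrite HW0. ring. }
  destruct (Hu' y0 Hy0E) as [du [du1 [_ Eu]]]. destruct (Hv' y0 Hy0E) as [dv [dv1 [_ Ev]]].
  assert (HdN : is_derive (fun t => v1 t * u t - v t * u1 t) y0 (v2 y0 * u y0 - v y0 * u2 y0)).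
  { apply is_derive_Reals.
    replace (v2 y0 * u y0 - v y0 * u2 y0)
      with ((v2 y0 * u y0 + v1 y0 * u1 y0) - (v1 y0 * u1 y0 + v y0 * u2 y0)) by ring.
    apply derivable_pt_lim_minus; apply derivable_pt_lim_mult; apply is_derive_Reals; assumption. }
  assert (HdW : is_derive W y0 ((v2 y0 * u y0 - v y0 * u2 y0) / u y0 ^ 2)).
  { assert (Hu2 : u y0 ^ 2 <> 0) by (apply pow_nonzero; lra).
    assert (Hd := is_derive_div _ (fun t => u t ^ 2) y0 _ _ HdN (is_derive_pow u 2 y0 _ du) Hu2).
    cbv beta in Hd. rewrite Htan in Hd.
    match type of Hd with is_derive _ _ ?l => replace (_ / u y0 ^ 2) with l; [exact Hd|] end.
    simpl. field. lra. }
  assert (HdW_pos : 0 < (v2 y0 * u y0 - v y0 * u2 y0) / u y0 ^ 2).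
  { apply Rdiv_lt_0_compat; [|apply pow2_gt_0; lra].
    apply (wronskian_deriv_pos (B y0) (A y0) (H y0) (D y0) (u y0) (u1 y0) (u2 y0) (v y0) (v1 y0)); auto. }
  destruct (second_derivative_test_right (fun t => v t / u t) W y0 (b - y0) _
              ltac:(lra) ltac:(intros; apply Hw; lra) HW0 HdW HdW_pos) as [x [Hx Hgt]].
  assert (Hle := Hmax x ltac:(lra)). lra.
Qed.

Lemma ratio_le_one : Em <> p_infty ->
  filterlim (fun y => v y / u y) (lower_boundary_filter Em) (locally 1) ->
  filterlim (fun y => v y / u y) (Rbar_locally p_infty) (locally 1) ->
  forall y, inE Em y -> v y <= u y.
Proof.
  intros HEm Hlow Hhigh y Hy.
  assert (Huy : 0 < u y) by (apply Hu, Hy).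
  apply Rnot_lt_le. intro Hgt.
  set (w := fun t => v t / u t).
  assert (Hc : 1 < w y).
  { apply (Rmult_lt_reg_r (u y)); [lra|].
    unfold w, Rdiv. rewrite Rmult_assoc, Rinv_l; lra. }
  destruct (filter_ex _ (filter_and _ _ (lower_boundary_filter_below Em y HEm Hy)
              (filterlim_lt_eventually _ _ _ _ Hlow Hc))) as [a [[Ha Hay] Hwa]].
  assert (Hhigh_y : Rbar_locally p_infty (fun b => y < b)) by (exists y; auto).
  destruct (filter_ex _ (filter_and _ _ Hhigh_y (filterlim_lt_eventually _ _ _ _ Hhigh Hc)))
    as [b [Hyb Hwb]].
  change (w a < w y) in Hwa. change (w b < w y) in Hwb.
  destruct (continuity_ab_maj w a b ltac:(lra)) as [y0 [Hmax Hy0]].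
  { intros t Ht. apply ratio_continuity_pt. eapply inE_le; [exact Ha|lra]. }
  assert (Hwy0 : w y <= w y0) by (apply Hmax; lra).
  assert (Hay0 : a <> y0) by (intros <-; lra).
  assert (Hby0 : b <> y0) by (intros ->; lra).
  assert (Hy0E : inE Em y0) by (eapply inE_le; [exact Ha|lra]).
  assert (Hle := ratio_local_max_le a b y0 Ha ltac:(lra) ltac:(intros; apply Hmax; lra)).
  assert (Hw1 : w y0 <= 1).
  { unfold w. assert (0 < u y0) by (apply Hu, Hy0E).
    apply (Rmult_le_reg_r (u y0)); [lra|].
    unfold Rdiv. rewrite Rmult_assoc, Rinv_l; lra. }
  lra.
Qed.

End Comparison.

Theorem theorem4p7
  (Em : Rbar) (HEm : Em <> p_infty)
  (r lam sigma a b rho delta : R -> R) (R0 : R)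
  (Hr : loc_lipschitz_on Em r) (Hlam : loc_lipschitz_on Em lam)
  (Hsigma : loc_lipschitz_on Em sigma) (Ha : loc_lipschitz_on Em a)
  (Hb : loc_lipschitz_on Em b) (Hrho : loc_lipschitz_on Em rho)
  (Hdelta : loc_lipschitz_on Em delta)
  (Hsigma_pos : forall y, inE Em y -> 0 < sigma y)
  (Hb_nz : forall y, inE Em y -> b y <> 0)
  (Hrho_rng : forall y, inE Em y -> -1 <= rho y <= 1)
  (HR0pos : 0 < R0) (HR0ne1 : R0 <> 1)
  (u ut : R -> R)
  (Hu : global_C2_solution Em R0 r lam a b rho delta u)
  (Hut : global_C2_solution Em R0 r lam a b rho delta ut)
  (Hlim_low : filterlim (fun y => ut y / u y) (lower_boundary_filter Em) (locally 1))
  (Hlim_high : filterlim (fun y => ut y / u y) (Rbar_locally p_infty) (locally 1)) :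
  forall y, inE Em y -> u y = ut y.
Proof.
  intros y Hy.
  assert (Hpos : forall z, inE Em z -> 0 < u z /\ 0 < ut z)
    by (intros z Hz; split; [apply (proj1 Hu)|apply (proj1 Hut)]; exact Hz).
  assert (Hlow_inE : lower_boundary_filter Em (inE Em))
    by exact (filter_imp _ _ (fun z Hz => proj1 Hz) (lower_boundary_filter_below Em y HEm Hy)).
  apply Rle_antisym.
  - apply (ratio_le_one Em b _ _ _ ut u Hb_nz Hut Hu HEm); [| |exact Hy].
    + apply (filterlim_ratio_inv _ u ut); [|exact Hlim_low]. exact (filter_imp _ _ Hpos Hlow_inE).
    + apply (filterlim_ratio_inv _ u ut); [|exact Hlim_high]. exact (filter_imp _ _ Hpos (p_infty_inE Em HEm)).
  - exact (ratio_le_one Em b _ _ _ u ut Hb_nz Hu Hut HEm Hlim_low Hlim_high y Hy).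
Qed.
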